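(* Let $(L,\le,\bot,\top)$ be a complete lattice and $(\&_i,\swarrow^i,\nwarrow_i)$, $i=1,\dots,n$, adjoint triples on $L$ with $x\,\&_i\,\top=\top\,\&_i\,x=x$ for all $x\in L$ and all $i$. Let $(A,B,R,\sigma)$ be a normalized context with concept lattice $\mathcal{M}$. If $\mathcal{M}$ has a decomposition into independent blocks, then $(A,B,R,\sigma)$ can be decomposed into independent subcontexts.
   Context: An adjoint triple on $L$ is a triple of maps $\&,\swarrow,\nwarrow\colon L\times L\to L$ with $x\le z\swarrow y\iff x\& y\le z\iff y\le z\nwarrow x$. A context is $(A,B,R,\sigma)$ with $A,B$ non-empty, $R\colon A\times B\to L$, $\sigma\colon A\times B\to\{1,\dots,n\}$; normalized means every $a\in A$ has $b_1,b_2$ with $R(a,b_1)\ne\bot$, $R(a,b_2)=\bot$, and every $b\in B$ has $a_1,a_2$ with $R(a_1,b)\ne\bot$, $R(a_2,b)=\bot$. For $g\colon B\to L$, $f\colon A\to L$: $g^\uparrow(a)=\inf_{b}R(a,b)\swarrow^{\sigma(a,b)}g(b)$, $f^\downarrow(b)=\inf_{a}R(a,b)\nwarrow_{\sigma(a,b)}f(a)$. $\mathcal{M}$ is the complete lattice of pairs $\langle g,f\rangle$ with $g^\uparrow=f$, $f^\downarrow=g$, ordered by $g_1\le g_2$ pointwise. For a bounded lattice $(M,\preceq,\bot,\top)$, a block is a sublattice $K\subsetneq M$ with $K\setminus\{\bot,\top\}\ne\varnothing$ and $(\{x\mid k\preceq x\}\cup\{x\mid x\preceq k\})\setminus\{\bot,\top\}\subseteq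 K$ for all $k\in K\setminus\{\bot,\top\}$; blocks $K_1,K_2$ are independent if $K_1\cap K_2\subseteq\{\bot,\top\}$; a decomposition into independent blocks is a family of pairwise independent blocks whose union is $M$. A separable subcontext is a tuple $(Y,X,R_{Y\times X},\sigma_{Y\times X})$ (restrictions of $R,\sigma$) with $Y\subsetneq A$, $X\subsetneq B$ non-empty, $R(a,b)\neq\bot$ for some $a\in Y,b\in X$, $R=\bot$ on $Y\times(B\setminus X)$ and on $(A\setminus Y)\times X$. $\&$ has zero-divisors if $x\&y=\bot$ for some $x,y\neq\bot$. A decomposition into independent subcontexts is a family $\{(A_\lambda,B_\lambda,R_\lambda,\sigma_\lambda)\}_{\lambda\in\Lambda}$, $\Lambda\ne\varnothing$, $R_\lambda,\sigma_\lambda$ restrictions to $A_\lambda\times B_\lambda$, such that each tuple is a separable subcontext, the $A_\lambda$ are pairwise disjoint with union $A$, the $B_\lambda$ are pairwise disjoint with union $B$, and for each $\lambda$ the conjunctor $\&_{\sigma(a,b)}$ has no zero-divisors for all $(a,b)\in((A\setminus A_\lambda)\times B_\lambda)\cup(A_\lambda\times(B\setminus B_\lambda))$. *)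

From mathcomp Require Import ssreflect ssrbool eqtype ssrnat fintype.

Set Implicit Arguments.
Unset Strict Implicit.

Record complete_lattice := CompleteLattice {
  carrier :> Type;
  le : carrier -> carrier -> Prop;
  le_refl : forall x, le x x;
  le_trans : forall x y z, le x y -> le y z -> le x z;
  le_antisym : forall x y, le x y -> le y x -> x = y;
  inf : (carrier -> Prop) -> carrier;
  inf_lb : forall (S : carrier -> Prop) x, S x -> le (inf S) x;
  inf_glb : forall (S : carrier -> Prop) y, (forall x, S x -> le y x) -> le y (inf S)
}.

Definition lbot (L : complete_lattice) : L := inf (fun _ : L => True).
Definition ltop (L : complete_lattice) : L := inf (fun _ : L => False).

Section Context.
Variables (L : complete_lattice) (n : nat).
(* conj i x y = x &_i y ; sw i z y = z swarrow^i y ; nw i z x = z nwarrow_i x *)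
Variables (conj sw nw : 'I_n -> L -> L -> L).

Definition adjoint_triple (i : 'I_n) : Prop :=
  forall x y z : L,
    (le x (sw i z y) <-> le (conj i x y) z) /\
    (le (conj i x y) z <-> le y (nw i z x)).

Definition top_is_unit (i : 'I_n) : Prop :=
  forall x : L, conj i x (ltop L) = x /\ conj i (ltop L) x = x.

Definition has_zero_divisors (i : 'I_n) : Prop :=
  exists x y : L, x <> lbot L /\ y <> lbot L /\ conj i x y = lbot L.

Variables (A B : Type) (R : A -> B -> L) (sigma : A -> B -> 'I_n).

Definition normalized_context : Prop :=
  (exists a : A, True) /\ (exists b : B, True) /\
  (forall a, exists b1 b2, R a b1 <> lbot L /\ R a b2 = lbot L) /\
  (forall b, exists a1 a2, R a1 b <> lbot L /\ R a2 b = lbot L).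

Definition up (g : B -> L) (a : A) : L :=
  inf (fun x => exists b, x = sw (sigma a b) (R a b) (g b)).
Definition down (f : A -> L) (b : B) : L :=
  inf (fun x => exists a, x = nw (sigma a b) (R a b) (f a)).

Definition concept := ((B -> L) * (A -> L))%type.
Definition is_concept (c : concept) : Prop :=
  up (fst c) = snd c /\ down (snd c) = fst c.
Definition concept_le (c1 c2 : concept) : Prop :=
  forall b, le (fst c1 b) (fst c2 b).

Definition M_bot (c : concept) : Prop :=
  is_concept c /\ forall c', is_concept c' -> concept_le c c'.
Definition M_top (c : concept) : Prop :=
  is_concept c /\ forall c', is_concept c' -> concept_le c' c.
Definition nontrivial (c : concept) : Prop := ~ M_bot c /\ ~ M_top c.

Definition M_meet (x y z : concept) : Prop :=
  is_concept z /\ concept_le z x /\ concept_le z y /\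
  forall w, is_concept w -> concept_le w x -> concept_le w y -> concept_le w z.
Definition M_join (x y z : concept) : Prop :=
  is_concept z /\ concept_le x z /\ concept_le y z /\
  forall w, is_concept w -> concept_le x w -> concept_le y w -> concept_le z w.

Definition is_block (K : concept -> Prop) : Prop :=
  (forall c, K c -> is_concept c) /\
  (forall x y z, K x -> K y -> M_meet x y z -> K z) /\
  (forall x y z, K x -> K y -> M_join x y z -> K z) /\
  (exists c, is_concept c /\ ~ K c) /\
  (exists k, K k /\ nontrivial k) /\
  (forall k, K k -> nontrivial k ->
     forall x, is_concept x -> (concept_le k x \/ concept_le x k) ->
       nontrivial x -> K x).

Definition independent_blocks (K1 K2 : concept -> Prop) : Prop :=
  forall c, K1 c -> K2 c -> M_bot c \/ M_top c.

Definition decomposition_into_independent_blocks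
  (I : Type) (K : I -> concept -> Prop) : Prop :=
  (forall i, is_block (K i)) /\
  (forall i j, i <> j -> independent_blocks (K i) (K j)) /\
  (forall c, is_concept c -> exists i, K i c).

Definition separable_subcontext (Y : A -> Prop) (X : B -> Prop) : Prop :=
  (exists a, Y a) /\ (exists a, ~ Y a) /\
  (exists b, X b) /\ (exists b, ~ X b) /\
  (exists a b, Y a /\ X b /\ R a b <> lbot L) /\
  (forall a b, Y a -> ~ X b -> R a b = lbot L) /\
  (forall a b, ~ Y a -> X b -> R a b = lbot L).

Definition decomposition_into_independent_subcontexts
  (Lam : Type) (As : Lam -> A -> Prop) (Bs : Lam -> B -> Prop) : Prop :=
  (exists l : Lam, True) /\
  (forall l, separable_subcontext (As l) (Bs l)) /\
  (forall l m, l <> m -> forall a, ~ (As l a /\ As m a)) /\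
  (forall a, exists l, As l a) /\
  (forall l m, l <> m -> forall b, ~ (Bs l b /\ Bs m b)) /\
  (forall b, exists l, Bs l b) /\
  (forall l a b, ((~ As l a /\ Bs l b) \/ (As l a /\ ~ Bs l b)) ->
     ~ has_zero_divisors (sigma a b)).

End Context.

From mathcomp Require Import ssreflect ssrfun ssrbool fintype.
From Stdlib Require Import Classical ClassicalEpsilon FunctionalExtensionality.

(* For an object b let gamma_b be the concept generated by the extent that is
   top at b and bot elsewhere, and for an attribute a let mu_a be the concept
   whose intent is generated by the intent that is top at a and bot elsewhere;
   both are nontrivial since the context is normalized and top is a unit.
   Block K_i yields the subcontext of all a with mu_a in K_i and all b with
   gamma_b in K_i.  Whenever x &_sigma(a,b) y <= R(a,b) for some x, y <> bot --
   which is the case if R(a,b) <> bot (take x = top, y = R(a,b)) and if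
   &_sigma(a,b) has zero divisors -- the concepts mu_a and gamma_b are joined by
   a chain of comparable nontrivial concepts (replace top by x in mu_a and by y
   in gamma_b), so the convexity of blocks puts them into the same block.  This
   yields both the separability of each subcontext and the absence of zero
   divisors between subcontexts. *)

Set Implicit Arguments.
Unset Strict Implicit.

Section Lattice.
Variable L : complete_lattice.

Local Notation bot := (lbot L).
Local Notation top := (ltop L).

Lemma lbot_le (x : L) : le bot x.
Proof. exact: inf_lb. Qed.

Lemma le_ltop (x : L) : le x top.
Proof. by apply: inf_glb. Qed.

Lemma neq_lbot_nle (x : L) : x <> bot -> ~ le x bot.
Proof. by move=> nx le_x_bot; apply/nx/le_antisym/lbot_le. Qed.

Definition le_fun (T : Type) (f g : T -> L) : Prop := forall t, le (f t) (g t).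

Definition point (T : Type) (t : T) (v : L) : T -> L :=
  fun t' => if excluded_middle_informative (t' = t) then v else bot.

Lemma point_id (T : Type) (t : T) v : point t v t = v.
Proof. by rewrite /point; case: (excluded_middle_informative (t = t)). Qed.

Lemma point_le_fun (T : Type) (t : T) v f : le v (f t) -> le_fun (point t v) f.
Proof.
move=> le_v t'; rewrite /point.
by case: (excluded_middle_informative (t' = t)) => [e|ne] /=; [subst t' | apply: lbot_le].
Qed.

Lemma le_fun_point (T : Type) (t : T) v w : le v w -> le_fun (point t v) (point t w).
Proof.
move=> le_vw t'; rewrite /point.
by case: (excluded_middle_informative (t' = t)) => [e|ne] //=; apply: le_refl.
Qed.

End Lattice.

Section AdjointTriples.
Variables (L : complete_lattice) (n : nat) (conj sw nw : 'I_n -> L -> L -> L).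
Hypothesis Hadj : forall i, adjoint_triple conj sw nw i.

Local Notation bot := (lbot L).
Local Notation top := (ltop L).

Lemma le_sw i (x y z : L) : le x (sw i z y) <-> le (conj i x y) z.
Proof. exact: (Hadj i x y z).1. Qed.

Lemma le_nw i (x y z : L) : le (conj i x y) z <-> le y (nw i z x).
Proof. exact: (Hadj i x y z).2. Qed.

Lemma conj_monor i (x y y' : L) : le y y' -> le (conj i x y) (conj i x y').
Proof. by move=> le_y; apply/le_nw/(le_trans le_y)/le_nw/le_refl. Qed.

Lemma conj_lbotl i (y z : L) : le (conj i bot y) z.
Proof. exact/le_sw/lbot_le. Qed.

Lemma conj_lbotr i (x z : L) : le (conj i x bot) z.
Proof. exact/le_nw/lbot_le. Qed.

Hypothesis Hunit : forall i, top_is_unit conj i.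

Lemma sw_ltop_le i (z : L) : le (sw i z top) z.
Proof. by have /le_sw := le_refl (sw i z top); rewrite (Hunit i _).1. Qed.

Lemma nw_ltop_le i (z : L) : le (nw i z top) z.
Proof. by have /le_nw := le_refl (nw i z top); rewrite (Hunit i _).2. Qed.

End AdjointTriples.

Section ConceptLattice.
Variables (L : complete_lattice) (n : nat) (conj sw nw : 'I_n -> L -> L -> L).
Hypothesis Hadj : forall i, adjoint_triple conj sw nw i.
Variables (A B : Type) (R : A -> B -> L) (sigma : A -> B -> 'I_n).

Local Notation bot := (lbot L).
Local Notation top := (ltop L).
Local Notation upR := (up sw R sigma).
Local Notation downR := (down nw R sigma).
Local Notation is_concept := (is_concept sw nw R sigma).
Local Notation nontrivial := (nontrivial sw nw R sigma).

Lemma le_down_up (g : B -> L) (f : A -> L) : le_fun g (downR f) <-> le_fun f (upR g).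
Proof.
split=> le_gf.
- move=> a; apply: inf_glb => _ [b ->]; apply/(le_sw Hadj)/(le_nw Hadj).
  by apply: le_trans (le_gf b) _; apply: inf_lb; exists a.
- move=> b; apply: inf_glb => _ [a ->]; apply/(le_nw Hadj)/(le_sw Hadj).
  by apply: le_trans (le_gf a) _; apply: inf_lb; exists b.
Qed.

Lemma le_down_up_id (g : B -> L) : le_fun g (downR (upR g)).
Proof. by apply/le_down_up => a; apply: le_refl. Qed.

Lemma le_up_down_id (f : A -> L) : le_fun f (upR (downR f)).
Proof. by apply/le_down_up => b; apply: le_refl. Qed.

Lemma up_anti (g1 g2 : B -> L) : le_fun g1 g2 -> le_fun (upR g2) (upR g1).
Proof.
by move=> le_g; apply/le_down_up => b; apply: le_trans (le_g b) (le_down_up_id g2 b).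
Qed.

Lemma down_anti (f1 f2 : A -> L) : le_fun f1 f2 -> le_fun (downR f2) (downR f1).
Proof.
by move=> le_f; apply/le_down_up => a; apply: le_trans (le_f a) (le_up_down_id f2 a).
Qed.

Definition concept_of (g : B -> L) : concept L A B := (downR (upR g), upR g).

Lemma concept_of_is_concept g : is_concept (concept_of g).
Proof.
split=> //=; apply: functional_extensionality => a; apply: le_antisym.
- exact: up_anti (le_down_up_id g) a.
- exact: le_up_down_id.
Qed.

Lemma concept_of_le g c : is_concept c -> le_fun g c.1 -> concept_le (concept_of g) c.
Proof.
case: c => g' f' [/= <- <-] /le_down_up le_g b.
exact: down_anti le_g b.
Qed.

Lemma le_up_point a b v x : le (conj (sigma a b) x v) (R a b) -> le x (upR (point b v) a).
Proof.
move=> le_xv; apply: inf_glb => _ [b' ->]; apply/(le_sw Hadj).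
rewrite /point; case: (excluded_middle_informative (b' = b)) => [e|ne] /=.
  by subst b'.
exact: (conj_lbotr Hadj).
Qed.

Lemma le_down_point a b x y : le (conj (sigma a b) x y) (R a b) -> le y (downR (point a x) b).
Proof.
move=> le_xy; apply: inf_glb => _ [a' ->]; apply/(le_nw Hadj).
rewrite /point; case: (excluded_middle_informative (a' = a)) => [e|ne] /=.
  by subst a'.
exact: (conj_lbotl Hadj).
Qed.

Hypothesis Hunit : forall i, top_is_unit conj i.
Hypothesis Hnorm : normalized_context R.

Lemma ltop_nle_lbot : ~ le top bot.
Proof.
have [[a _] [_ [HA _]]] := Hnorm; have [b [_ [Rab _]]] := HA a.
by move=> le_top_bot; apply: (neq_lbot_nle Rab); apply: le_trans (le_ltop _) le_top_bot.
Qed.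

Lemma up_ltop_le a : le (upR (fun _ => top) a) bot.
Proof.
have [_ [_ [HA _]]] := Hnorm; have [_ [b [_ Rab]]] := HA a.
rewrite -Rab; apply: le_trans (sw_ltop_le Hadj Hunit (sigma a b) (R a b)).
by apply: inf_lb; exists b.
Qed.

Lemma down_ltop_le b : le (downR (fun _ => top) b) bot.
Proof.
have [_ [_ [_ HB]]] := Hnorm; have [_ [a [_ Rab]]] := HB b.
rewrite -Rab; apply: le_trans (nw_ltop_le Hadj Hunit (sigma a b) (R a b)).
by apply: inf_lb; exists a.
Qed.

Lemma M_bot_extent c : M_bot sw nw R sigma c -> forall b, le (c.1 b) bot.
Proof.
case=> _ c_min b; apply: le_trans (c_min _ (concept_of_is_concept (fun _ => bot)) b) _.
apply: le_trans (down_ltop_le b); apply: down_anti => a.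
by apply: inf_glb => _ [b' ->]; apply/(le_sw Hadj)/(conj_lbotr Hadj).
Qed.

Lemma M_top_intent c : M_top sw nw R sigma c -> forall a, le (c.2 a) bot.
Proof.
case=> [[c_up _]] c_max a; rewrite -c_up; apply: le_trans (up_ltop_le a).
apply: up_anti => b; apply: le_trans (le_down_up_id _ b) _.
exact: c_max _ (concept_of_is_concept (fun _ => top)) b.
Qed.

Lemma concept_of_nontrivial g a b :
  ~ le (g b) bot -> ~ le (upR g a) bot -> nontrivial (concept_of g).
Proof.
move=> g_b up_g_a; split=> [/M_bot_extent/(_ b) | /M_top_intent/(_ a) //].
by move/(le_trans (le_down_up_id g b)).
Qed.

Lemma nontrivial_extent c : is_concept c -> nontrivial c -> exists b, ~ le (c.1 b) bot.
Proof.
move=> c_concept [not_bot _]; apply: NNPP => c_null; apply: not_bot.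
split=> // c' _ b; apply: le_trans (lbot_le _).
by apply: NNPP => c_b; apply: c_null; exists b.
Qed.

Definition object_concept (b : B) (v : L) : concept L A B := concept_of (point b v).

Definition attribute_concept (a : A) (x : L) : concept L A B :=
  concept_of (downR (point a x)).

Lemma object_concept_nontrivial b v : ~ le v bot -> nontrivial (object_concept b v).
Proof.
have [_ [_ [_ HB]]] := Hnorm; have [a [_ [Rab _]]] := HB b.
move=> v_nz; apply: (@concept_of_nontrivial _ a b); first by rewrite point_id.
move=> le_up; apply: (neq_lbot_nle Rab); apply: le_trans le_up.
apply: le_up_point; rewrite -{2}[R a b](Hunit (sigma a b) _).1.
exact/(conj_monor Hadj)/le_ltop.
Qed.

Lemma attribute_concept_nontrivial a b x y :
  ~ le x bot -> ~ le y bot -> le (conj (sigma a b) x y) (R a b) ->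
  nontrivial (attribute_concept a x).
Proof.
move=> x_nz y_nz le_xy; apply: (@concept_of_nontrivial _ a b).
- by move/(le_trans (le_down_point le_xy)).
- by move/(le_trans (le_up_down_id _ a)); rewrite point_id.
Qed.

Lemma object_concept_mono b v w :
  le v w -> concept_le (object_concept b v) (object_concept b w).
Proof.
move=> le_vw; apply: concept_of_le; first exact: concept_of_is_concept.
by apply: point_le_fun; apply: le_trans le_vw _; rewrite -{1}(point_id b w);
  apply: le_down_up_id.
Qed.

Lemma attribute_concept_anti a x y :
  le x y -> concept_le (attribute_concept a y) (attribute_concept a x).
Proof.
move=> le_xy; apply: concept_of_le; first exact: concept_of_is_concept.
move=> b; apply: le_trans (le_down_up_id _ b).
exact/down_anti/le_fun_point.
Qed.

Lemma object_le_attribute_concept a b x y :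
  le (conj (sigma a b) x y) (R a b) ->
  concept_le (object_concept b y) (attribute_concept a x).
Proof.
move=> le_xy; apply: concept_of_le; first exact: concept_of_is_concept.
apply: point_le_fun; apply: le_trans (le_down_up_id _ b).
exact: le_down_point.
Qed.

Lemma attribute_concept_ltop_nontrivial a : nontrivial (attribute_concept a top).
Proof.
have [_ [_ [HA _]]] := Hnorm; have [b [_ [Rab _]]] := HA a.
apply: (attribute_concept_nontrivial (b := b) (y := R a b)).
- exact: ltop_nle_lbot.
- exact: neq_lbot_nle.
- by rewrite (Hunit _ _).2; apply: le_refl.
Qed.

Lemma object_concept_ltop_nontrivial b : nontrivial (object_concept b top).
Proof. exact/object_concept_nontrivial/ltop_nle_lbot. Qed.

Section Blocks.
Variables (I : Type) (K : I -> concept L A B -> Prop).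
Hypothesis HK : decomposition_into_independent_blocks sw nw R sigma K.

Lemma block_unique i j c : nontrivial c -> K i c -> K j c -> i = j.
Proof.
move=> [c_not_bot c_not_top] Ki_c Kj_c; apply: NNPP => neq_ij.
by have [_ [indep _]] := HK; case: (indep i j neq_ij c Ki_c Kj_c).
Qed.

Lemma exists_other_block (i : I) : exists j, j <> i.
Proof.
have [blocks [_ cover]] := HK; have [_ [_ [_ [[c [c_concept not_Ki_c]] _]]]] := blocks i.
by have [j Kj_c] := cover c c_concept; exists j => eq_ji; subst j.
Qed.

Lemma le_same_blocks c d : is_concept c -> is_concept d -> nontrivial c -> nontrivial d ->
  concept_le c d -> forall i, K i c <-> K i d.
Proof.
move=> c_concept d_concept c_nt d_nt le_cd i.
have [blocks _] := HK; have [_ [_ [_ [_ [_ convex]]]]] := blocks i.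
by split=> [Ki_c | Ki_d]; [apply: (convex c) | apply: (convex d)]; auto.
Qed.

(* attribute_concept a top <= attribute_concept a x >= object_concept b y
   <= object_concept b top, all of them nontrivial. *)
Lemma linked_same_blocks a b x y :
  ~ le x bot -> ~ le y bot -> le (conj (sigma a b) x y) (R a b) ->
  forall i, K i (attribute_concept a top) <-> K i (object_concept b top).
Proof.
move=> x_nz y_nz le_xy i.
have mu_x := attribute_concept_nontrivial x_nz y_nz le_xy.
have delta_y := object_concept_nontrivial b y_nz.
apply: iff_trans (le_same_blocks (concept_of_is_concept _) (concept_of_is_concept _)
  (attribute_concept_ltop_nontrivial a) mu_x (attribute_concept_anti a (le_ltop x)) i) _.
apply: iff_trans (iff_sym (le_same_blocks (concept_of_is_concept _)
  (concept_of_is_concept _) delta_y mu_x (object_le_attribute_concept le_xy) i)) _.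
exact: le_same_blocks (concept_of_is_concept _) (concept_of_is_concept _) delta_y
  (object_concept_ltop_nontrivial b) (object_concept_mono b (le_ltop y)) i.
Qed.

Lemma nonzero_same_blocks a b : R a b <> bot ->
  forall i, K i (attribute_concept a top) <-> K i (object_concept b top).
Proof.
move=> Rab; apply: (linked_same_blocks ltop_nle_lbot (neq_lbot_nle Rab)).
by rewrite (Hunit _ _).2; apply: le_refl.
Qed.

Lemma zero_divisors_same_blocks a b : has_zero_divisors conj (sigma a b) ->
  forall i, K i (attribute_concept a top) <-> K i (object_concept b top).
Proof.
case=> x [y [x_nz [y_nz xy0]]].
apply: (linked_same_blocks (neq_lbot_nle x_nz) (neq_lbot_nle y_nz)).
by rewrite xy0; apply: lbot_le.
Qed.

Lemma block_has_object_concept i : exists b, K i (object_concept b top).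
Proof.
have [blocks _] := HK; have [in_M [_ [_ [_ [[k [Ki_k k_nt]] _]]]]] := blocks i.
have k_concept := in_M k Ki_k; have [b k_b] := nontrivial_extent k_concept k_nt.
have delta_nt := object_concept_nontrivial b k_b.
have le_delta_k : concept_le (object_concept b (k.1 b)) k.
  exact/concept_of_le/point_le_fun/le_refl.
exists b; apply/(le_same_blocks (concept_of_is_concept _) (concept_of_is_concept _)
  delta_nt (object_concept_ltop_nontrivial b) (object_concept_mono b (le_ltop _)) i).
exact/(le_same_blocks (concept_of_is_concept _) k_concept delta_nt k_nt le_delta_k i).
Qed.

Lemma block_has_linked_pair i : exists a b,
  [/\ K i (attribute_concept a top), K i (object_concept b top) & R a b <> bot].
Proof.
have [b Ki_b] := block_has_object_concept i.
have [_ [_ [_ HB]]] := Hnorm; have [a [_ [Rab _]]] := HB b.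
by exists a, b; split=> //; apply/(nonzero_same_blocks Rab).
Qed.

Lemma block_separable i : separable_subcontext R
  (fun a => K i (attribute_concept a top)) (fun b => K i (object_concept b top)).
Proof.
have [a [b [Ki_a Ki_b Rab]]] := block_has_linked_pair i.
have [j neq_ji] := exists_other_block i.
have [a' [b' [Kj_a' Kj_b' _]]] := block_has_linked_pair j.
split; first by exists a.
split.
  exists a' => Ki_a'; apply: neq_ji.
  exact: block_unique (attribute_concept_ltop_nontrivial a') Kj_a' Ki_a'.
split; first by exists b.
split.
  exists b' => Ki_b'; apply: neq_ji.
  exact: block_unique (object_concept_ltop_nontrivial b') Kj_b' Ki_b'.
split; first by exists a, b.
split=> a0 b0 Ki_a0 Ki_b0; apply: NNPP => /nonzero_same_blocks/(_ i) same; tauto.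
Qed.

Lemma blocks_decompose_context : decomposition_into_independent_subcontexts conj R sigma
  (fun i a => K i (attribute_concept a top)) (fun i b => K i (object_concept b top)).
Proof.
have [_ [_ cover]] := HK.
have [[a _] _] := Hnorm.
split; first by have [i _] := cover _ (concept_of_is_concept (downR (point a top))); exists i.
split; first exact: block_separable.
split.
  move=> i j neq_ij a' [Ki_a' Kj_a']; apply: neq_ij.
  exact: block_unique (attribute_concept_ltop_nontrivial a') Ki_a' Kj_a'.
split; first by move=> a'; apply: cover; apply: concept_of_is_concept.
split.
  move=> i j neq_ij b [Ki_b Kj_b]; apply: neq_ij.
  exact: block_unique (object_concept_ltop_nontrivial b) Ki_b Kj_b.
split; first by move=> b; apply: cover; apply: concept_of_is_concept.
by move=> i a' b straddle /zero_divisors_same_blocks/(_ i); tauto.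
Qed.

End Blocks.
End ConceptLattice.

Theorem theorem36 (L : complete_lattice) (n : nat)
  (conj sw nw : 'I_n -> L -> L -> L)
  (Hadj : forall i, adjoint_triple conj sw nw i)
  (Hunit : forall i, top_is_unit conj i)
  (A B : Type) (R : A -> B -> L) (sigma : A -> B -> 'I_n)
  (Hnorm : normalized_context R) :
  (exists (I : Type) (K : I -> concept L A B -> Prop),
      decomposition_into_independent_blocks sw nw R sigma K) ->
  exists (Lam : Type) (As : Lam -> A -> Prop) (Bs : Lam -> B -> Prop),
    decomposition_into_independent_subcontexts conj R sigma As Bs.
Proof.
case=> I [K HK]; exists I; do 2 eexists.
exact: (blocks_decompose_context Hadj Hunit Hnorm HK).
Qed.
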